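(* There is an absolute constant $c>0$ such that the following holds. Let $A\subset\mathbb{R}$ be a finite convex set and $A'\subseteq A$ nonempty. Then \[ |A'+A-A|\ge c\,|A'|\,|A|. \] Moreover, $|A-A|\,|A+A|\ge c\,|A|^3$.
   Context: A finite set $A=\{a_1<a_2<\dots<a_k\}\subset\mathbb{R}$ is convex if $a_i-a_{i-1}<a_{i+1}-a_i$ for all $1<i<k$. For finite sets, $X+Y-Z=\{x+y-z:x\in X,y\in Y,z\in Z\}$, $A+A=\{a+b:a,b\in A\}$, $A-A=\{a-b:a,b\in A\}$. *)

(* Finite subsets of an ordered field are represented by
   duplicate-free sequences; cardinality = size. *)
From HB Require Import structures.
From mathcomp Require Import all_boot all_order all_algebra.
Set Implicit Arguments. Unset Strict Implicit. Unset Printing Implicit Defensive.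
Import Order.TTheory GRing.Theory Num.Theory.
Local Open Scope ring_scope.

Definition convex_set (R : realFieldType) (A : seq R) : Prop :=
  let s := sort <=%R A in
  forall i : nat, (0 < i)%N -> (i.+1 < size s)%N ->
    s`_i - s`_i.-1 < s`_i.+1 - s`_i.

Definition sumdiff (R : realFieldType) (X Y Z : seq R) : seq R :=
  undup [seq w - z | w <- [seq x + y | x <- X, y <- Y], z <- Z].

Definition sumset (R : realFieldType) (X Y : seq R) : seq R :=
  undup [seq x + y | x <- X, y <- Y].

Definition diffset (R : realFieldType) (X Y : seq R) : seq R :=
  undup [seq x - y | x <- X, y <- Y].

From HB Require Import structures.
From mathcomp Require Import all_boot all_order all_algebra.
From mathcomp Require Import finmap zify ring lra.
From Stdlib Require Import Classical.

(* List a convex set as a_0 < ... < a_(k-1); its gaps d_i = a_(i+1) - a_i increase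
   strictly. Each a_p in A' yields k - 1 elements of A' + A - A: a_p + d_i for i <= p and
   a_(i+1) - d_p for p <= i. Monotonicity of the gaps makes each family injective in
   (p, i), so |A'| (k - 1) <= 2 |A' + A - A|.

   For the second bound, with m1 = |A - A|, m2 = |A + A| and M large, let
   B = {j M + a : j < m1, a in A} U {l m1 M - a : l < m2, a in A}. Then
   |A + B| <= 2 m1 m2, while for X inside A the set X + B + B contains m1 m2 disjoint
   translates of X + A - A. Petridis' lemma (a subset X minimising |X + B| / |X| satisfies
   |X + B + C| |X| <= |X + B| |X + C|) gives a nonempty X inside A with
   |X + B + B| |A|^2 <= |A + B|^2 |X|; with the first part for A' = X this yields
   |A|^3 <= 12 |A - A| |A + A|. *)

Set Implicit Arguments. Unset Strict Implicit. Unset Printing Implicit Defensive.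
Import Order.TTheory GRing.Theory Num.Theory.
Local Open Scope ring_scope.

Lemma uniq_leq_size_map (T1 T2 : eqType) (f : T1 -> T2) (s1 : seq T1) (s2 : seq T2) :
  uniq s1 -> {in s1 &, injective f} -> {in s1, forall x, f x \in s2} ->
  (size s1 <= size s2)%N.
Proof.
move=> uniq_s1 f_inj f_s2; rewrite -(size_map f); apply: uniq_leq_size.
  by rewrite map_inj_in_uniq.
by move=> _ /mapP [x /f_s2 ? ->].
Qed.

Lemma mem_sumdiff (R : realFieldType) (X Y Z : seq R) x y z :
  x \in X -> y \in Y -> z \in Z -> x + y - z \in sumdiff X Y Z.
Proof.
move=> xX yY zZ; rewrite mem_undup; apply/allpairsP; exists (x + y, z); split => //.
by apply/allpairsP; exists (x, y).
Qed.

Lemma mem_sumset (R : realFieldType) (X Y : seq R) x y :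
  x \in X -> y \in Y -> x + y \in sumset X Y.
Proof. by move=> xX yY; rewrite mem_undup; apply/allpairsP; exists (x, y). Qed.

Lemma mem_diffset (R : realFieldType) (X Y : seq R) x y :
  x \in X -> y \in Y -> x - y \in diffset X Y.
Proof. by move=> xX yY; rewrite mem_undup; apply/allpairsP; exists (x, y). Qed.

Section CardUnion.
Local Open Scope fset_scope.
Variable K : choiceType.
Implicit Types A B D : {fset K}.

Lemma leq_cardfsU_sub A B D : D `<=` A `&` B -> (#|` A `|` B| + #|` D| <= #|` A| + #|` B|)%N.
Proof. by move=> /fsubset_leq_card DAB; rewrite -(cardfsUI A B) leq_add2l. Qed.

Lemma leq_cardfsU_sup A B D : A `&` B `<=` D -> (#|` A| + #|` B| <= #|` A `|` B| + #|` D|)%N.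
Proof. by move=> /fsubset_leq_card ABD; rewrite -(cardfsUI A B) leq_add2l. Qed.

End CardUnion.

Section Petridis.
Local Open Scope fset_scope.
Local Open Scope ring_scope.
Variable V : zmodType.
Implicit Types (X Y Z B C : {fset V}) (c z : V).

Definition addfs X Y : {fset V} := [fset x + y | x in X, y in Y].

Lemma addfsP z X Y :
  reflect (exists2 x, x \in X & exists2 y, y \in Y & z = x + y) (z \in addfs X Y).
Proof. exact: imfset2P. Qed.

Lemma mem_addfs x y X Y : x \in X -> y \in Y -> x + y \in addfs X Y.
Proof. by move=> xX yY; apply: in_imfset2. Qed.

Definition translate c X : {fset V} := [fset x + c | x in X].

Lemma card_translate c X : #|` translate c X| = #|` X|.
Proof. by rewrite card_imfset //; apply: addIr. Qed.

Lemma addfsU1 c C X : addfs X (c |` C) = addfs X C `|` translate c X.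
Proof.
apply/fsetP => z; apply/addfsP/fsetUP => [[x xX [y]]|].
  by rewrite !inE => /orP [/eqP -> -> | yC ->]; [right; apply: in_imfset | left; apply: mem_addfs].
case=> [/addfsP [x xX [y yC ->]] | /imfsetP [x /= xX ->]].
  by exists x => //; exists y; rewrite // !inE yC orbT.
by exists x => //; exists c; rewrite // !inE eqxx.
Qed.

Definition addfs_ratio_minimal B X :=
  forall Z, Z `<=` X -> (#|` addfs X B| * #|` Z| <= #|` addfs Z B| * #|` X|)%N.

Lemma exists_addfs_ratio_minimal B Y : Y != fset0 ->
  exists2 X, X `<=` Y /\ X != fset0 &
    addfs_ratio_minimal B X /\ (#|` addfs X B| * #|` Y| <= #|` addfs Y B| * #|` X|)%N.
Proof.
elim/finSet_rect: Y => Y IH Y0.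
have [[Z [ZY lt_ratio]] | Ymin] := classic (exists Z, Z `<=` Y /\
    (#|` addfs Z B| * #|` Y| < #|` addfs Y B| * #|` Z|)%N); last first.
  exists Y => //; split=> // Z ZY; rewrite leqNgt; apply/negP => lt_ratio.
  by apply: Ymin; exists Z.
have Z0 : Z != fset0 by apply: contraTneq lt_ratio => ->; rewrite cardfs0 muln0.
have ZY' : Z `<` Y.
  by rewrite fproperEneq ZY andbT; apply: contraTneq lt_ratio => ->; rewrite ltnn.
have [X [XZ X0] [Xmin le_ratio]] := IH Z ZY' Z0.
exists X; first by split=> //; apply: fsubset_trans ZY.
split=> //; have Zpos : (0 < #|` Z|)%N by rewrite cardfs_gt0.
rewrite -(leq_pmul2r Zpos); nia.
Qed.

Lemma petridis B C X : addfs_ratio_minimal B X ->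
  (#|` addfs (addfs X B) C| * #|` X| <= #|` addfs X B| * #|` addfs X C|)%N.
Proof.
move=> Xmin; elim/fset1U_rect: C => [|c C _ IH].
  suff -> : addfs (addfs X B) fset0 = fset0 by rewrite cardfs0.
  by apply/fsetP => z; rewrite inE; apply/negP => /addfsP [? _ [?]]; rewrite inE.
set Y := [fset x in X | [forall b : B, x + val b + c \in addfs (addfs X B) C]].
have YX : Y `<=` X by apply/fsubsetP => y; rewrite !inE => /andP [].
have shared : translate c (addfs Y B)
    `<=` addfs (addfs X B) C `&` translate c (addfs X B).
  apply/fsubsetP => _ /imfsetP [_ /= /addfsP [y yY [b bB ->]] ->].
  move: yY; rewrite !inE => /andP [yX /forallP /(_ [` bB]) /= ->] /=.
  by apply: in_imfset; apply: mem_addfs.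
have lost : addfs X C `&` translate c X `<=` translate c Y.
  apply/fsubsetP => _ /fsetIP [/addfsP [x' x'X [c' c'C ->]] /imfsetP [x /= xX e]].
  apply/imfsetP; exists x => //; rewrite !inE xX; apply/forallP => b /=.
  have -> : x + val b + c = x' + val b + c' by rewrite addrAC -e addrAC.
  by apply: mem_addfs; rewrite // mem_addfs // fsvalP.
have lost_card : (#|` addfs X C| + #|` X| <= #|` addfs X (c |` C)| + #|` Y|)%N.
  rewrite addfsU1 -(card_translate c X) -(card_translate c Y).
  exact: leq_cardfsU_sup.
have new_card : (#|` addfs (addfs X B) (c |` C)| + #|` addfs Y B|
    <= #|` addfs (addfs X B) C| + #|` addfs X B|)%N.
  rewrite addfsU1 -(card_translate c (addfs X B)) -(card_translate c (addfs Y B)).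
  exact: leq_cardfsU_sub.
move: (Xmin Y YX) IH lost_card new_card; nia.
Qed.

Lemma exists_small_addfs_addfs B A : A != fset0 ->
  exists2 X, X `<=` A /\ X != fset0 &
    (#|` addfs (addfs X B) B| * #|` A| ^ 2 <= #|` addfs A B| ^ 2 * #|` X|)%N.
Proof.
move=> A0; have [X [XA X0] [Xmin le_ratio]] := exists_addfs_ratio_minimal B A0.
exists X => //; have X_gt0 : (0 < #|` X|)%N by rewrite cardfs_gt0.
have XBB := petridis B Xmin.
rewrite -(leq_pmul2r X_gt0); nia.
Qed.

End Petridis.

Section ConvexSet.
Variables (R : realFieldType) (A : seq R).
Hypotheses (uniqA : uniq A) (convexA : convex_set A).

Let s := sort <=%R A.
Let k := size A.
Let gap i := s`_i.+1 - s`_i.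

Lemma mem_nth_sort i : (i < k)%N -> s`_i \in A.
Proof. by move=> ik; rewrite -(mem_sort <=%R) mem_nth ?size_sort. Qed.

Lemma ltr_nth_sort i j : (i < j)%N -> (j < k)%N -> s`_i < s`_j.
Proof.
move=> ij jk; have sorted_s : sorted <%R s by rewrite sort_lt_sorted.
by rewrite (lt_sorted_ltn_nth 0 sorted_s) // !inE size_sort // (ltn_trans ij).
Qed.

Lemma ler_nth_sort i j : (i <= j)%N -> (j < k)%N -> s`_i <= s`_j.
Proof. by rewrite leq_eqVlt => /predU1P [-> // | ij] jk; rewrite ltW ?ltr_nth_sort. Qed.

Lemma gap_gt0 i : (i.+1 < k)%N -> 0 < gap i.
Proof. by move=> ik; rewrite subr_gt0 ltr_nth_sort. Qed.

Lemma ltr_gap i j : (i < j)%N -> (j.+1 < k)%N -> gap i < gap j.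
Proof.
elim: j => // j IH; rewrite ltnS leq_eqVlt => /predU1P [-> | ij] jk;
  have step := convexA (i := j.+1) erefl; rewrite size_sort in step.
  exact: step.
exact: lt_trans (IH ij (ltnW jk)) (step jk).
Qed.

Lemma ler_gap i j : (i <= j)%N -> (j.+1 < k)%N -> gap i <= gap j.
Proof. by rewrite leq_eqVlt => /predU1P [-> // | ij] jk; rewrite ltW ?ltr_gap. Qed.

Lemma gap_inj i j : (i.+1 < k)%N -> (j.+1 < k)%N -> gap i = gap j -> i = j.
Proof.
move=> ik jk eq_gap; case: (ltngtP i j) => // [ij | ji].
  by move: (ltr_gap ij jk); rewrite eq_gap ltxx.
by move: (ltr_gap ji ik); rewrite eq_gap ltxx.
Qed.

(* For [i <= p], [s_p + gap i] lies in [(s_p, s_(p+1)]], so these shifts are ordered by [p]. *)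
Lemma ltr_shift_up p i p' i' : (i <= p)%N -> (p < p')%N -> (p' < k)%N -> (i'.+1 < k)%N ->
  s`_p + gap i < s`_p' + gap i'.
Proof.
move=> ip pp' p'k i'k; apply: (le_lt_trans (y := s`_p')); last by rewrite ltrDl gap_gt0.
have : gap i <= gap p by apply: ler_gap; rewrite // (leq_ltn_trans pp').
have : s`_p.+1 <= s`_p' by apply: ler_nth_sort.
rewrite /gap; lra.
Qed.

(* Symmetrically, for [p <= i], [s_(i+1) - gap p] lies in [[s_i, s_(i+1))]. *)
Lemma ltr_shift_down p i p' i' : (p <= i)%N -> (p' <= i')%N -> (i < i')%N -> (i'.+1 < k)%N ->
  s`_i.+1 - gap p < s`_i'.+1 - gap p'.
Proof.
move=> pi p'i' ii' i'k.
have pk : (p.+1 < k)%N by rewrite (leq_ltn_trans _ i'k) // ltnS (leq_trans pi) // ltnW.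
apply: (lt_le_trans (y := s`_i.+1)); first by rewrite gtrBl gap_gt0.
have : gap p' <= gap i' by apply: ler_gap.
have : s`_i.+1 <= s`_i' by apply: ler_nth_sort; rewrite // ltnW.
rewrite /gap; lra.
Qed.

Let shift_up (x : nat * nat) := s`_x.1 + gap x.2.
Let shift_down (x : nat * nat) := s`_x.2.+1 - gap x.1.
Let index_pair (x : nat * nat) := (x.1 < k)%N && (x.2.+1 < k)%N.

Lemma shift_up_inj :
  {in [pred x | index_pair x & x.2 <= x.1]%N &, injective shift_up}.
Proof.
move=> [p i] [p' i'] /andP [/andP [/= pk ik] ip] /andP [/andP [/= p'k i'k] i'p'].
rewrite /shift_up /=; case: (ltngtP p p') => [pp' | p'p | <-] eq_shift.
- by move: (ltr_shift_up ip pp' p'k i'k); rewrite eq_shift ltxx.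
- by move: (ltr_shift_up i'p' p'p pk ik); rewrite eq_shift ltxx.
- by move/addrI/(gap_inj ik i'k): eq_shift => ->.
Qed.

Lemma shift_down_inj :
  {in [pred x | index_pair x & x.1 <= x.2]%N &, injective shift_down}.
Proof.
move=> [p i] [p' i'] /andP [/andP [/= pk ik] pi] /andP [/andP [/= p'k i'k] p'i'].
rewrite /shift_down /=; case: (ltngtP i i') => [ii' | i'i | <-] eq_shift.
- by move: (ltr_shift_down pi p'i' ii' i'k); rewrite eq_shift ltxx.
- by move: (ltr_shift_down p'i' pi i'i ik); rewrite eq_shift ltxx.
- have pk1 : (p.+1 < k)%N by apply: (leq_ltn_trans _ ik); rewrite ltnS.
  have p'k1 : (p'.+1 < k)%N by apply: (leq_ltn_trans _ i'k); rewrite ltnS.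
  by move/addrI/oppr_inj/(gap_inj pk1 p'k1): eq_shift => ->.
Qed.

Section Shifts.
Variable A' : seq R.
Let T := sumdiff A' A A.

Lemma shift_up_sumdiff x : index_pair x -> s`_x.1 \in A' -> shift_up x \in T.
Proof.
case: x => p i /andP [/= pk ik] pA'.
by rewrite /shift_up /gap addrA mem_sumdiff ?mem_nth_sort // ltnW.
Qed.

Lemma shift_down_sumdiff x : index_pair x -> (x.1 <= x.2)%N -> s`_x.1 \in A' ->
  shift_down x \in T.
Proof.
case: x => p i /andP [/= pk ik] /= pi pA'.
have pk1 : (p.+1 < k)%N by apply: (leq_ltn_trans _ ik); rewrite ltnS.
have -> : shift_down (p, i) = s`_p + s`_i.+1 - s`_p.+1 by rewrite /shift_down /gap /=; ring.
by rewrite mem_sumdiff ?mem_nth_sort.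
Qed.

(* Each index pair [(p, i)] is counted in [T] through [shift_up] if [i <= p] and
   through [shift_down] if [p <= i], both injective there. *)
Lemma card_index_pairs (P : seq nat) :
  uniq P -> (forall p, p \in P -> (p < k)%N /\ s`_p \in A') ->
  (size P * k.-1 <= 2 * size T)%N.
Proof.
move=> uniqP P_A'; pose L := [seq (p, i) | p <- P, i <- iota 0 k.-1].
have uniqL : uniq L by rewrite allpairs_uniq ?iota_uniq // => -[? ?] [? ?].
have L_pair x : x \in L -> index_pair x /\ s`_x.1 \in A'.
  case/allpairsP => -[p i] [pP]; rewrite mem_iota add0n => ik ->.
  have [pk pA'] := P_A' p pP; split=> //; apply/andP; split=> //.
  by move: ik => /=; lia.
pose up := [seq x <- L | x.2 <= x.1]%N; pose down := [seq x <- L | x.1 <= x.2]%N.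
have up_T : (size up <= size T)%N.
  apply: (uniq_leq_size_map (f := shift_up)); first exact: filter_uniq.
    by move=> x y; rewrite !mem_filter => /andP [? /L_pair []] ? ? /andP [? /L_pair []] ? ?;
      apply: shift_up_inj; rewrite inE; apply/andP.
  by move=> x; rewrite mem_filter => /andP [_ /L_pair []]; apply: shift_up_sumdiff.
have down_T : (size down <= size T)%N.
  apply: (uniq_leq_size_map (f := shift_down)); first exact: filter_uniq.
    by move=> x y; rewrite !mem_filter => /andP [? /L_pair []] ? ? /andP [? /L_pair []] ? ?;
      apply: shift_down_inj; rewrite inE; apply/andP.
  by move=> x; rewrite mem_filter => /andP [px /L_pair [? ?]]; apply: shift_down_sumdiff.
have L_split : (size L <= size up + size down)%N.
  rewrite !size_filter -count_predUI -count_predT (leq_trans _ (leq_addr _ _)) //.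
  by apply: sub_count => x _; rewrite /= leq_total.
have size_L : size L = (size P * k.-1)%N by rewrite size_allpairs size_iota.
move: L_split; rewrite size_L; lia.
Qed.

End Shifts.

Lemma card_sumdiff_convex (A' : seq R) : uniq A' -> {subset A' <= A} ->
  (size A' * k <= 3 * size (sumdiff A' A A))%N.
Proof.
move=> uniqA' subA'; pose P := [seq index a s | a <- A'].
have A'T : (size A' <= size (sumdiff A' A A))%N.
  by apply: uniq_leq_size => // x xA'; rewrite -(addrK x x) mem_sumdiff ?subA'.
have uniqP : uniq P.
  rewrite map_inj_in_uniq // => a b aA' bA' eq_index.
  by rewrite -(nth_index 0 (_ : a \in s)) ?eq_index ?nth_index ?mem_sort ?subA'.
have P_A' p : p \in P -> (p < k)%N /\ s`_p \in A'.
  move=> /mapP [a aA' ->]; have as_ : a \in s by rewrite mem_sort subA'.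
  by rewrite /k -(size_sort <=%R) index_mem nth_index.
have size_P : size P = size A' by rewrite size_map.
have := card_index_pairs uniqP P_A'; rewrite size_P.
have : (size A' * k <= size A' * k.-1 + size A')%N by rewrite -mulnSr leq_mul2l leqSpred orbT.
lia.
Qed.

End ConvexSet.

Section Digits.
Local Open Scope fset_scope.
Local Open Scope ring_scope.
Variable R : realFieldType.
Implicit Types (M x y z : R) (S : seq R).

Lemma natmulD_inj M j j' x y : 0 < M -> `|x - y| < M ->
  j%:R * M + x = j'%:R * M + y -> j = j'.
Proof.
move=> M_gt0; rewrite ltr_norml => /andP [xy1 xy2] eq_jM.
have lt_digit a b u v : (a < b)%N -> u - v < M -> a%:R * M + u < b%:R * M + v.
  move=> ab uv; have : a.+1%:R * M <= b%:R * M by rewrite ler_pM2r // ler_nat.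
  rewrite -natr1 mulrDl mul1r; lra.
case: (ltngtP j j') => // [jj' | j'j].
  by move: (lt_digit _ _ _ _ jj' xy2); rewrite eq_jM ltxx.
have yx : y - x < M by lra.
by move: (lt_digit _ _ _ _ j'j yx); rewrite eq_jM ltxx.
Qed.

Definition digits (m : nat) M S : {fset R} :=
  [fset z in [seq j%:R * M + x | j <- iota 0 m, x <- S]].

Lemma digitsP m M S z :
  reflect (exists j, exists2 x, (j < m)%N /\ x \in S & z = j%:R * M + x) (z \in digits m M S).
Proof.
rewrite inE; apply: (iffP allpairsP) => [[[j x] [jm xS ->]] | [j [x [jm xS] ->]]].
  by exists j, x; move: jm; rewrite // mem_iota.
by exists (j, x); rewrite mem_iota.
Qed.

Lemma mem_digits m M S j x : (j < m)%N -> x \in S -> j%:R * M + x \in digits m M S.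
Proof. by move=> jm xS; apply/digitsP; exists j, x. Qed.

Lemma card_digits_le m M S : (#|` digits m M S| <= m * size S)%N.
Proof. by rewrite card_fseq (leq_trans (size_undup _)) // size_allpairs size_iota. Qed.

Lemma card_digits m M S : 0 < M -> uniq S -> {in S &, forall x y, `|x - y| < M} ->
  #|` digits m M S| = (m * size S)%N.
Proof.
move=> M_gt0 uniqS S_small; rewrite card_fseq undup_id ?size_allpairs ?size_iota //.
rewrite allpairs_uniq ?iota_uniq // => -[j x] [j' x'] /allpairsP [[? ?] [_ xS [-> ->]]].
move=> /allpairsP [[? ?] [_ x'S [-> ->]]] /= eq_digit.
have jj' := natmulD_inj M_gt0 (S_small _ _ xS x'S) eq_digit.
by move: eq_digit; rewrite jj' => /addrI ->.
Qed.

End Digits.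

Section Encoding.
Local Open Scope fset_scope.
Local Open Scope ring_scope.
Variables (R : realFieldType) (A : seq R) (m1 m2 : nat).

(* Elements of [X + A - A], [X] inside [A], have norm at most [3 * \sum_(a <- A) `|a|]. *)
Let M : R := 6 * \sum_(a <- A) `|a| + 1.

Definition encoding_set : {fset R} := digits m1 M A `|` digits m2 (m1%:R * M) (map -%R A).

Lemma card_addfs_encoding_set :
  (#|` addfs [fset a in A] encoding_set| <= m1 * size (sumset A A) + m2 * size (diffset A A))%N.
Proof.
have sub_digits : addfs [fset a in A] encoding_set
    `<=` digits m1 M (sumset A A) `|` digits m2 (m1%:R * M) (diffset A A).
  apply/fsubsetP => _ /addfsP [x xA [_ /fsetUP [] /digitsP [j [b [jm bA] ->]] ->]];
    rewrite inE in xA; apply/fsetUP.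
    by left; rewrite addrCA mem_digits ?mem_sumset.
  case/mapP: bA => a aA ->; right.
  by rewrite addrCA mem_digits ?mem_diffset.
apply: leq_trans (fsubset_leq_card sub_digits) _.
by rewrite (leq_trans (leq_card_fsetU _ _)) ?leq_add ?card_digits_le.
Qed.

Lemma card_addfs_addfs_encoding_set (X : {fset R}) : X `<=` [fset a in A] ->
  (m1 * m2 * size (sumdiff X A A) <= #|` addfs (addfs X encoding_set) encoding_set|)%N.
Proof.
move=> XA; set S := \sum_(a <- A) `|a|.
have norm_A a : a \in A -> `|a| <= S by move=> aA; rewrite /S (big_rem a) //= lerDl sumr_ge0.
have norm_W w : w \in sumdiff X A A -> `|w| <= 3 * S.
  rewrite mem_undup => /allpairsP [[u b] [/= uXA bA ->]] /=.
  case/allpairsP: uXA => -[x a] [xX aA ->] /=.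
  have xA : x \in A by move: (fsubsetP XA x xX); rewrite inE.
  move: (norm_A _ xA) (norm_A _ aA) (norm_A _ bA) (ler_normB (x + a) b) (ler_normD x a).
  lra.
have S_ge0 : 0 <= S by rewrite sumr_ge0.
have M_gt0 : 0 < M by rewrite /M -/S; lra.
have W_small : {in sumdiff X A A &, forall w w', `|w - w'| < M}.
  move=> w w' /norm_W ? /norm_W ?; have := ler_normB w w'; rewrite /M -/S; lra.
rewrite -(card_digits _ M_gt0 (undup_uniq _) W_small).
apply: fsubset_leq_card; apply/fsubsetP => _ /digitsP [n [w [nm wW] ->]].
move: wW; rewrite mem_undup => /allpairsP [[u b] [/= uXA bA ->]].
case/allpairsP: uXA => -[x a] [xX aA ->] /=.
have m1_gt0 : (0 < m1)%N by move: nm; case: m1.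
have -> : n%:R * M + (x + a - b) =
    x + ((n %% m1)%:R * M + a) + ((n %/ m1)%:R * (m1%:R * M) + - b).
  by rewrite {1}(divn_eq n m1) natrD natrM; ring.
apply: mem_addfs; first apply: mem_addfs => //.
  by apply/fsetUP; left; rewrite mem_digits ?ltn_pmod.
by apply/fsetUP; right; rewrite mem_digits ?map_f // ltn_divLR // mulnC.
Qed.

End Encoding.

Lemma card_diffset_sumset_convex (R : realFieldType) (A : seq R) :
  uniq A -> convex_set A ->
  (size A ^ 3 <= 12 * (size (diffset A A) * size (sumset A A)))%N.
Proof.
move=> uniqA convexA; have [-> | A_gt0] := posnP (size A); first by rewrite exp0n.
set m1 := size (diffset A A); set m2 := size (sumset A A).
pose B := encoding_set A m1 m2; pose FA := [fset a in A]%fset.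
have card_FA : #|` FA| = size A by rewrite card_fseq undup_id.
have FA0 : FA != fset0 by rewrite -cardfs_gt0 card_FA.
have [X [XA X0] small_XBB] := exists_small_addfs_addfs B FA0.
have XA' : {subset X <= A} by move=> x /(fsubsetP XA); rewrite inE.
have X_gt0 : (0 < #|` X|)%N by rewrite cardfs_gt0.
have [a aA] : exists a, a \in A by case: (A) A_gt0 => // a ? _; exists a; rewrite mem_head.
have m_gt0 : (0 < m1 * m2)%N.
  by rewrite muln_gt0 -!has_predT; apply/andP; split; apply/hasP;
    [exists (a - a); rewrite ?mem_diffset | exists (a + a); rewrite ?mem_sumset].
have card_XB := card_addfs_encoding_set A m1 m2.
have card_XBB := card_addfs_addfs_encoding_set m1 m2 XA.
have card_XAA := card_sumdiff_convex uniqA convexA (fset_uniq X) XA'.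
rewrite card_FA in small_XBB.
rewrite [(m2 * m1)%N]mulnC addnn -mul2n in card_XB.
move: card_XB card_XBB card_XAA small_XBB m_gt0.
set k := size A; set D := (m1 * m2)%N; set x := #|` X|; set w := size (sumdiff X A A).
set s := #|` addfs FA B|; set p := #|` addfs (addfs X B) B|.
move=> card_XB card_XBB card_XAA small_XBB D_gt0.
have Dx_gt0 : (0 < D * x)%N by rewrite muln_gt0 D_gt0 X_gt0.
rewrite -(leq_pmul2l Dx_gt0).
have mul_card_XAA : (D * (x * k) * k ^ 2 <= D * (3 * w) * k ^ 2)%N.
  by rewrite leq_mul2r leq_mul2l card_XAA !orbT.
have mul_card_XBB : (3 * (D * w) * k ^ 2 <= 3 * p * k ^ 2)%N.
  by rewrite leq_mul2r leq_mul2l card_XBB !orbT.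
have mul_card_XB : (s ^ 2 * x <= (2 * D) ^ 2 * x)%N by rewrite leq_mul2r leq_exp2r ?card_XB ?orbT.
nia.
Qed.

Theorem proposition1 :
  exists c : rat, 0 < c /\
    forall (R : realFieldType) (A : seq R), uniq A -> convex_set A ->
      (forall A' : seq R, uniq A' -> A' != [::] -> {subset A' <= A} ->
         c * (size A')%:R * (size A)%:R <= (size (sumdiff A' A A))%:R)
      /\
      c * (size A)%:R ^+ 3 <= (size (diffset A A))%:R * (size (sumset A A))%:R.
Proof.
exists (1 / 12); split; first lra.
move=> R A uniqA convexA; split => [A' uniqA' _ subA'|].
  have := card_sumdiff_convex uniqA convexA uniqA' subA'.
  have := ler0n rat (size (sumdiff A' A A)).
  rewrite -(ler_nat rat) !natrM; lra.
have := card_diffset_sumset_convex uniqA convexA.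
rewrite -(ler_nat rat) !natrM; lra.
Qed.
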